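(* The map $G$ has sensitive dependence on initial conditions on $(\mathcal{X},d)$, with a constant of sensitivity at least $2^{\mathsf{N}-1}$: there is $\delta\ge 2^{\mathsf{N}-1}$ such that for every $x\in\mathcal{X}$ and every neighborhood $V$ of $x$ there exist $y\in V$ and $n\ge0$ with $d(G^n(x),G^n(y))>\delta$.
   Context: Fix an integer $\mathsf{N}\ge 1$ and write $\llbracket a;b\rrbracket=\{a,a+1,\dots,b\}$. Let $f:\mathbb{Z}/4\mathbb{Z}\to\mathbb{Z}/4\mathbb{Z}$, $f(x)=x+1 \pmod 4$, with $f^{-1}(x)=x-1\pmod 4$ and $f^0=\mathrm{id}$. Let $\mathrm{sign}(x)=1$ if $x>0$, $0$ if $x=0$, $-1$ if $x<0$. For $k\in\llbracket -\mathsf{N};\mathsf{N}\rrbracket$ define $f_k:(\mathbb{Z}/4\mathbb{Z})^{\mathsf{N}}\to(\mathbb{Z}/4\mathbb{Z})^{\mathsf{N}}$ by $f_k(C_1,\dots,C_{\mathsf{N}})=(C_1,\dots,C_{|k|-1},f^{\mathrm{sign}(k)}(C_{|k|}),\dots,f^{\mathrm{sign}(k)}(C_{\mathsf{N}}))$ (so $f_0$ is the identity). Folding sequences are $F=(F^j)_{j\in\mathbb{N}}\in\llbracket -\mathsf{N};\mathsf{N}\rrbracket^{\mathbb{N}}$; let $i(F)=F^0$ and let $\sigma$ be the shift, $\sigma((F^j)_{j})=(F^{j+1})_{j}$. A finite sequence $(k_1,\dots,k_n)$ is identified with $(k_1,\dots,k_n,0,0,\dots)$. On $\check{\mathcal{X}}=(\mathbb{Z}/4\mathbb{Z})^{\mathsf{N}}\times\llbracket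 -\mathsf{N};\mathsf{N}\rrbracket^{\mathbb{N}}$ define $G((C,F))=(f_{i(F)}(C),\sigma(F))$. SAW requirement: for $C\in(\mathbb{Z}/4\mathbb{Z})^{\mathsf{N}}$ let $p(C)=(X_0,\dots,X_{\mathsf{N}})\in(\mathbb{Z}^2)^{\mathsf{N}+1}$ with $X_0=(0,0)$ and $X_i=X_{i-1}+v(C_i)$, where $v(0)=(1,0)$, $v(1)=(0,-1)$, $v(2)=(-1,0)$, $v(3)=(0,1)$. $C$ satisfies the SAW requirement iff the points $X_0,\dots,X_{\mathsf{N}}$ are pairwise distinct. Let $\mathfrak{C}_{\mathsf{N}}$ be the set of $C\in(\mathbb{Z}/4\mathbb{Z})^{\mathsf{N}}$ for which there exist $n\ge1$ and $k_1,\dots,k_n\in\llbracket -\mathsf{N};\mathsf{N}\rrbracket$ such that $C$ is the first component of $G^n(((0,\dots,0),(k_1,\dots,k_n)))$ and, for every $i\le n$, the first component of $G^i(((0,\dots,0),(k_1,\dots,k_n)))$ satisfies the SAW requirement. Let $\mathcal{X}=\mathfrak{C}_{\mathsf{N}}\times\llbracket -\mathsf{N};\mathsf{N}\rrbracket^{\mathbb{N}}$ with metric $d((C,F),(\check C,\check F))=d_C(C,\check C)+d_F(F,\check F)$, where $d_C(C,\check C)=\sum_{k=1}^{\mathsf{N}}\delta(C_k,\check C_k)2^{\mathsf{N}-k}$ ($\delta(a,b)=0$ if $a=b$, $1$ otherwise) and $d_F(F,\check F)=\frac{9}{2\mathsf{N}}\sum_{k=0}^{\infty}\frac{|F^k-\check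 F^k|}{10^{k+1}}$. The paper regards $G$ as a self-map of $\mathcal{X}$. *)

From Stdlib Require Import Reals ZArith Arith List Lia.
From Coquelicot Require Import Coquelicot.
Open Scope R_scope.

(* Encoding conventions.
   - Z/4Z is represented by its canonical representatives {0,1,2,3} in Z.
   - A configuration C in (Z/4Z)^N is a function cfg := nat -> Z, where C i
     is the i-th coordinate C_i for 1 <= i <= N; coordinates outside 1..N are
     irrelevant and are normalised to 0 (see [wf_cfg]).
   - A folding sequence F in [[-N;N]]^Nat is a function nat -> Z with values
     in [-N, N]. *)
Definition cfg := (nat -> Z)%type.
Definition fseq := (nat -> Z)%type.

Definition wf_cfg (N : nat) (C : cfg) : Prop :=
  forall i, ((1 <= i <= N)%nat -> (0 <= C i < 4)%Z) /\
            (~ (1 <= i <= N)%nat -> C i = 0%Z).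

Definition valid_fseq (N : nat) (F : fseq) : Prop :=
  forall j, (- Z.of_nat N <= F j <= Z.of_nat N)%Z.

Definition fpow (s x : Z) : Z := ((x + s) mod 4)%Z.

Definition f_k (N : nat) (k : Z) (C : cfg) : cfg :=
  fun i => if (andb (andb (1 <=? i)%nat (i <=? N)%nat) (Z.to_nat (Z.abs k) <=? i)%nat)
           then fpow (Z.sgn k) (C i) else C i.

Definition zero_cfg : cfg := fun _ => 0%Z.

(* finite folding sequence (k_1,...,k_n) identified with (k_1,...,k_n,0,0,...) *)
Definition fseq_of_list (l : list Z) : fseq := fun j => nth j l 0%Z.

Definition G (N : nat) (x : cfg * fseq) : cfg * fseq :=
  (f_k N (snd x 0%nat) (fst x), fun j => snd x (S j)).

Definition Giter (N n : nat) (x : cfg * fseq) : cfg * fseq :=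
  Nat.iter n (G N) x.

Definition v (c : Z) : Z * Z :=
  match c with
  | 0%Z => (1, 0)%Z
  | 1%Z => (0, -1)%Z
  | 2%Z => (-1, 0)%Z
  | _ => (0, 1)%Z
  end.

Fixpoint pos (C : cfg) (i : nat) : Z * Z :=
  match i with
  | O => (0, 0)%Z
  | S i' => let P := pos C i' in let w := v (C (S i')) in
            (fst P + fst w, snd P + snd w)%Z
  end.

Definition SAW (N : nat) (C : cfg) : Prop :=
  forall i j, (i <= N)%nat -> (j <= N)%nat -> pos C i = pos C j -> i = j.

Definition frakC (N : nat) (C : cfg) : Prop :=
  exists ks : list Z,
    (1 <= length ks)%nat /\
    List.Forall (fun k => (- Z.of_nat N <= k <= Z.of_nat N)%Z) ks /\
    C = fst (Giter N (length ks) (zero_cfg, fseq_of_list ks)) /\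
    (forall i, (1 <= i <= length ks)%nat ->
       SAW N (fst (Giter N i (zero_cfg, fseq_of_list ks)))).

Definition inX (N : nat) (x : cfg * fseq) : Prop :=
  frakC N (fst x) /\ valid_fseq N (snd x).

Fixpoint dC_aux (N : nat) (C C' : cfg) (k : nat) : R :=
  match k with
  | O => 0
  | S k' => dC_aux N C C' k' +
            (if Z.eqb (C k) (C' k) then 0 else 1) * pow 2 (N - k)%nat
  end.
Definition dC (N : nat) (C C' : cfg) : R := dC_aux N C C' N.

Definition dF (N : nat) (F F' : fseq) : R :=
  9 / (2 * INR N) *
  Series (fun k => IZR (Z.abs (F k - F' k)) / 10 ^ (S k)).

Definition d (N : nat) (x y : cfg * fseq) : R :=
  dC N (fst x) (fst y) + dF N (snd x) (snd y).

Definition nbhd (N : nat) (x : cfg * fseq) (V : cfg * fseq -> Prop) : Prop :=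
  exists eps, 0 < eps /\ forall y, inX N y -> d N x y < eps -> V y.

(* Changing a folding sequence only from a late index m on moves a point by
   at most 10^-m, so such points lie in every neighbourhood.  Choosing the new
   fold at index m so that it acts differently on the first coordinate, the two
   orbits have different first coordinates after m + 1 steps, which costs
   2^(N-1) in d_C; since the folding sequences also still differ, d_F adds a
   positive amount and the distance strictly exceeds 2^(N-1). *)
From Stdlib Require Import Reals ZArith Arith List Lia Lra.
From Coquelicot Require Import Coquelicot.
Open Scope R_scope.

Lemma Series_nonneg (a : nat -> R) :
  (forall k, 0 <= a k) -> ex_series a -> 0 <= Series a.
Proof.
  intros Ha Hex.
  replace 0 with (Series (fun k => 0 * a k)) by (rewrite Series_scal_l; ring).
  apply Series_le; [intros k; specialize (Ha k); lra | exact Hex].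
Qed.

Lemma Series_drop_zeros (a : nat -> R) (m : nat) :
  ex_series a -> (forall k, (k < m)%nat -> a k = 0) ->
  Series a = Series (fun k => a (m + k)%nat).
Proof.
  revert a; induction m as [|m IH]; intros a Hex Hzero.
  - reflexivity.
  - rewrite Series_incr_1 by exact Hex.
    rewrite Hzero, Rplus_0_l by lia.
    apply (IH (fun k => a (S k))).
    + exact (proj1 (ex_series_incr_1 a) Hex).
    + intros k Hk; apply Hzero; lia.
Qed.

Lemma ex_series_scal_geom (c q : R) :
  Rabs q < 1 -> ex_series (fun k => c * q ^ k).
Proof.
  intros Hq.
  apply (ex_series_ext (fun k => scal c (q ^ k))); [reflexivity|].
  apply (@ex_series_scal_l R_AbsRing R_NormedModule c), ex_series_geom, Hq.
Qed.

Lemma inv_pow10_lt (eps : R) : 0 < eps -> exists m : nat, / 10 ^ m < eps.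
Proof.
  intros Heps.
  destruct (pow_lt_1_zero (/ 10) ltac:(rewrite Rabs_pos_eq; lra) eps Heps)
    as [m Hm].
  exists m; rewrite <- pow_inv.
  specialize (Hm m (Nat.le_refl m)).
  rewrite Rabs_pos_eq in Hm; [exact Hm | apply pow_le; lra].
Qed.

Definition dF_term (F F' : fseq) (k : nat) : R :=
  IZR (Z.abs (F k - F' k)) / 10 ^ S k.

Lemma dF_eq_Series (N : nat) (F F' : fseq) :
  dF N F F' = 9 / (2 * INR N) * Series (dF_term F F').
Proof. reflexivity. Qed.

Section FoldingDistance.

Variable N : nat.
Hypothesis HN : (1 <= N)%nat.

Lemma dF_term_bound (F F' : fseq) (k : nat) :
  valid_fseq N F -> valid_fseq N F' ->
  0 <= dF_term F F' k <= 2 * INR N / 10 * (/ 10) ^ k.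
Proof.
  intros HF HF'.
  assert (Hdiff : 0 <= IZR (Z.abs (F k - F' k)) <= 2 * INR N).
  { rewrite INR_IZR_INZ, <- mult_IZR.
    specialize (HF k); specialize (HF' k); split; apply IZR_le; lia. }
  assert (Hpow : 0 < 10 ^ k) by (apply pow_lt; lra).
  unfold dF_term; rewrite pow_inv; simpl pow.
  split.
  - apply Rdiv_le_0_compat; [lra | apply Rmult_lt_0_compat; lra].
  - unfold Rdiv; rewrite Rinv_mult.
    assert (0 < / 10 ^ k) by (apply Rinv_0_lt_compat; lra).
    nra.
Qed.

Lemma ex_series_dF_term (F F' : fseq) :
  valid_fseq N F -> valid_fseq N F' -> ex_series (dF_term F F').
Proof.
  intros HF HF'.
  apply (@ex_series_le R_AbsRing R_CompleteNormedModule _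
           (fun k => 2 * INR N / 10 * (/ 10) ^ k)).
  - intros k; rewrite Rabs_pos_eq; apply dF_term_bound; auto.
  - apply ex_series_scal_geom; rewrite Rabs_pos_eq; lra.
Qed.

(* The weights 9 / (2N) and 10^-(k+1) are normalised so that the tail beyond
   m, with all differences as large as 2N, sums to exactly 10^-m. *)
Lemma dF_le_of_agree (F F' : fseq) (m : nat) :
  valid_fseq N F -> valid_fseq N F' ->
  (forall j, (j < m)%nat -> F j = F' j) ->
  dF N F F' <= / 10 ^ m.
Proof.
  intros HF HF' Hagree.
  assert (HNpos : 0 < INR N) by (apply lt_0_INR; lia).
  assert (Htail : Series (dF_term F F')
                  <= 2 * INR N / 10 * (/ 10) ^ m * Series (fun k => (/ 10) ^ k)).
  { rewrite (Series_drop_zeros _ m); [| now apply ex_series_dF_term |].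
    2: { intros k Hk; unfold dF_term; rewrite (Hagree k Hk), Z.sub_diag.
         change (Z.abs 0) with 0%Z; unfold Rdiv; ring. }
    rewrite <- Series_scal_l.
    apply Series_le.
    - intros k; pose proof (dF_term_bound F F' (m + k) HF HF') as Hk.
      rewrite pow_add in Hk; lra.
    - apply ex_series_scal_geom; rewrite Rabs_pos_eq; lra. }
  rewrite Series_geom in Htail by (rewrite Rabs_pos_eq; lra).
  rewrite dF_eq_Series.
  apply Rmult_le_compat_l with (r := 9 / (2 * INR N)) in Htail;
    [| apply Rdiv_le_0_compat; lra].
  eapply Rle_trans; [exact Htail|].
  rewrite <- pow_inv; apply Req_le; field; lra.
Qed.

Lemma dF_pos_of_head (F F' : fseq) :
  valid_fseq N F -> valid_fseq N F' -> F 0%nat <> F' 0%nat -> 0 < dF N F F'.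
Proof.
  intros HF HF' Hhead.
  assert (HNpos : 0 < INR N) by (apply lt_0_INR; lia).
  rewrite dF_eq_Series.
  apply Rmult_lt_0_compat; [apply Rdiv_lt_0_compat; lra|].
  rewrite Series_incr_1 by (apply ex_series_dF_term; auto).
  assert (Hhead_pos : 0 < dF_term F F' 0).
  { unfold dF_term; apply Rdiv_lt_0_compat; [apply IZR_lt; lia | simpl; lra]. }
  assert (0 <= Series (fun k => dF_term F F' (S k))).
  { apply Series_nonneg.
    - intros k; apply dF_term_bound; auto.
    - apply (proj1 (ex_series_incr_1 (dF_term F F'))), ex_series_dF_term; auto. }
  lra.
Qed.

Lemma dC_refl (C : cfg) : dC N C C = 0.
Proof.
  assert (Hk : forall k, dC_aux N C C k = 0).
  { induction k as [|k IH]; simpl; [reflexivity|].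
    rewrite IH, Z.eqb_refl; ring. }
  apply Hk.
Qed.

Lemma dC_aux_mono (C C' : cfg) (k l : nat) :
  (k <= l)%nat -> dC_aux N C C' k <= dC_aux N C C' l.
Proof.
  induction 1 as [|l _ IH]; [lra|].
  simpl; eapply Rle_trans; [exact IH|].
  assert (0 <= 2 ^ (N - S l)) by (apply pow_le; lra).
  destruct Z.eqb; lra.
Qed.

Lemma dC_ge_of_neq_1 (C C' : cfg) :
  C 1%nat <> C' 1%nat -> 2 ^ (N - 1) <= dC N C C'.
Proof.
  intros Hneq.
  apply Rle_trans with (dC_aux N C C' 1); [|apply dC_aux_mono; exact HN].
  simpl; apply Z.eqb_neq in Hneq; rewrite Hneq; lra.
Qed.

End FoldingDistance.

Definition alt_fold (k : Z) : Z := if (k =? 1)%Z then 0%Z else 1%Z.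

Lemma alt_fold_neq (k : Z) : k <> alt_fold k.
Proof. unfold alt_fold; destruct (Z.eqb_spec k 1); lia. Qed.

(* f_1 adds 1 to the first coordinate mod 4, whereas every f_k with k <> 1
   adds 0 or -1 to it (or leaves it untouched when |k| >= 2). *)
Lemma f_k_alt_fold_neq_1 (N : nat) (k : Z) (C : cfg) :
  (1 <= N)%nat -> f_k N k C 1%nat <> f_k N (alt_fold k) C 1%nat.
Proof.
  intros HN; unfold f_k, alt_fold, fpow.
  replace (1 <=? N)%nat with true by (symmetry; apply Nat.leb_le; exact HN).
  destruct (Z.eqb_spec k 1) as [-> | Hk1]; simpl; [Z.div_mod_to_equations; lia|].
  destruct (Nat.leb_spec (Z.to_nat (Z.abs k)) 1).
  - assert (k = (-1)%Z \/ k = 0%Z) as [-> | ->] by lia;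
      simpl; Z.div_mod_to_equations; lia.
  - Z.div_mod_to_equations; lia.
Qed.

Definition refold (m : nat) (F : fseq) : fseq :=
  fun j => if (m <=? j)%nat then alt_fold (F j) else F j.

Lemma valid_refold (N m : nat) (F : fseq) :
  (1 <= N)%nat -> valid_fseq N F -> valid_fseq N (refold m F).
Proof.
  intros HN HF j; unfold refold, alt_fold.
  specialize (HF j); destruct Nat.leb; [destruct Z.eqb|]; lia.
Qed.

Lemma refold_agree (m : nat) (F : fseq) (j : nat) :
  (j < m)%nat -> refold m F j = F j.
Proof.
  intros Hj; unfold refold.
  replace (m <=? j)%nat with false by (symmetry; apply Nat.leb_gt; exact Hj).
  reflexivity.
Qed.

Lemma refold_from (m : nat) (F : fseq) (j : nat) :
  (m <= j)%nat -> refold m F j = alt_fold (F j).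
Proof.
  intros Hj; unfold refold.
  replace (m <=? j)%nat with true by (symmetry; apply Nat.leb_le; exact Hj).
  reflexivity.
Qed.

Lemma d_refold_le (N m : nat) (C : cfg) (F : fseq) :
  (1 <= N)%nat -> valid_fseq N F -> d N (C, F) (C, refold m F) <= / 10 ^ m.
Proof.
  intros HN HF; unfold d; simpl.
  rewrite dC_refl, Rplus_0_l.
  apply dF_le_of_agree; auto using valid_refold.
  intros j Hj; symmetry; apply refold_agree, Hj.
Qed.

Lemma Giter_snd (N n : nat) (x : cfg * fseq) (j : nat) :
  snd (Giter N n x) j = snd x (j + n)%nat.
Proof.
  revert j; induction n as [|n IH]; intros j; simpl.
  - now rewrite Nat.add_0_r.
  - change (snd (Giter N n x) (S j) = snd x (j + S n)%nat).
    now rewrite IH, Nat.add_succ_r.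
Qed.

Lemma valid_Giter_snd (N n : nat) (x : cfg * fseq) :
  valid_fseq N (snd x) -> valid_fseq N (snd (Giter N n x)).
Proof. intros Hx j; rewrite Giter_snd; apply Hx. Qed.

Lemma Giter_fst_eq_of_agree (N n : nat) (C : cfg) (F F' : fseq) :
  (forall j, (j < n)%nat -> F j = F' j) ->
  fst (Giter N n (C, F)) = fst (Giter N n (C, F')).
Proof.
  induction n as [|n IH]; intros Hagree; [reflexivity|].
  change (f_k N (snd (Giter N n (C, F)) 0%nat) (fst (Giter N n (C, F))) =
          f_k N (snd (Giter N n (C, F')) 0%nat) (fst (Giter N n (C, F')))).
  rewrite !Giter_snd, IH by (intros j Hj; apply Hagree; lia).
  now rewrite Hagree by lia.
Qed.

Lemma d_G_gt_of_alt_fold (N : nat) (x y : cfg * fseq) :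
  (1 <= N)%nat -> valid_fseq N (snd x) -> valid_fseq N (snd y) ->
  fst x = fst y -> snd y 0%nat = alt_fold (snd x 0%nat) ->
  snd x 1%nat <> snd y 1%nat ->
  2 ^ (N - 1) < d N (G N x) (G N y).
Proof.
  intros HN Hx Hy Hfst Hfold Hnext; destruct x as [C F], y as [C' F'].
  simpl in *; subst C'.
  unfold d, G; simpl.
  assert (2 ^ (N - 1) <= dC N (f_k N (F 0%nat) C) (f_k N (F' 0%nat) C)).
  { apply dC_ge_of_neq_1; [exact HN|].
    rewrite Hfold; apply f_k_alt_fold_neq_1, HN. }
  assert (0 < dF N (fun j => F (S j)) (fun j => F' (S j))).
  { apply dF_pos_of_head; auto; intros j; [apply Hx | apply Hy]. }
  lra.
Qed.

Theorem mainTheorem6 (N : nat) (HN : (1 <= N)%nat) :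
  exists delta : R, 2 ^ (N - 1) <= delta /\
    forall x : cfg * fseq, inX N x ->
    forall V : cfg * fseq -> Prop, nbhd N x V ->
    exists y : cfg * fseq, inX N y /\ V y /\
      exists n : nat, d N (Giter N n x) (Giter N n y) > delta.
Proof.
  exists (2 ^ (N - 1)); split; [lra|].
  intros [C F] [HC HF] V [eps [Heps HV]]; simpl in HC, HF.
  destruct (inv_pow10_lt eps Heps) as [m Hm].
  assert (Hy : inX N (C, refold m F)) by (split; [exact HC | now apply valid_refold]).
  exists (C, refold m F); split; [exact Hy | split].
  - apply HV; [exact Hy|].
    eapply Rle_lt_trans; [apply d_refold_le|]; auto.
  - exists (S m).
    apply (d_G_gt_of_alt_fold N (Giter N m (C, F)) (Giter N m (C, refold m F))).
    + exact HN.
    + now apply valid_Giter_snd.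
    + now apply valid_Giter_snd, valid_refold.
    + apply Giter_fst_eq_of_agree; intros j Hj; symmetry; apply refold_agree, Hj.
    + rewrite !Giter_snd; simpl; now rewrite refold_from by lia.
    + rewrite !Giter_snd; simpl; rewrite refold_from by lia.
      apply alt_fold_neq.
Qed.
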